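(* Suppose that for each Polish space $E$ and each $\mu\in\mathcal P(E)$ we are given a function $\mathcal P(E)\ni\nu\mapsto\alpha(\nu|\mu)\in[0,\infty]$, such that: (1) $\alpha(\mu|\mu)=0$; (2) $\alpha(\nu|\mu)=\infty$ whenever $\nu\in\mathcal P(E)$ is not absolutely continuous with respect to $\mu$; (3) $\alpha(\nu K\,|\,\mu K)\le\alpha(\nu|\mu)$ for all Polish spaces $E,F$, all $\mu,\nu\in\mathcal P(E)$ and every kernel $K$ from $E$ to $F$. For each Polish space $E$ and $\mu\in\mathcal P(E)$ define $$\rho_\mu(f):=\sup_{\nu\in\mathcal P(E)}\left(\int_E f\,d\nu-\alpha(\nu|\mu)\right),\qquad f\in B(E).$$ Then each $\rho_\mu$ is a law invariant risk measure (on $L^\infty(E,\mu)$). Moreover, for any Polish spaces $F$ and $G$, any $\mu\in\mathcal P(F)$, $\nu\in\mathcal P(G)$, and any $f\in B(F)$, $g\in B(G)$ with $\mu\circ f^{-1}=\nu\circ g^{-1}$, we have $\rho_\mu(f)=\rho_\nu(g)$.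
   Context: For a Polish space $E$, $\mathcal P(E)$ is the set of Borel probability measures on $E$ and $B(E)$ the set of bounded Borel functions on $E$. A kernel from $E$ to $F$ (Polish spaces) is a measurable map $E\ni x\mapsto K_x\in\mathcal P(F)$, and $\mu K(\cdot):=\int_E\mu(dx)K_x(\cdot)\in\mathcal P(F)$. A risk measure on $L^\infty(E,\mu)$ is a convex functional that is monotone ($f\le g$ $\mu$-a.e. implies $\rho_\mu(f)\le\rho_\mu(g)$), cash additive ($\rho_\mu(f+c)=\rho_\mu(f)+c$ for constants $c$) and normalized ($\rho_\mu(0)=0$); law invariant means $\rho_\mu(f)=\rho_\mu(g)$ whenever $\mu\circ f^{-1}=\mu\circ g^{-1}$. *)

From HB Require Import structures.
From mathcomp Require Import all_boot all_order all_algebra.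
From mathcomp Require Import all_classical all_reals all_analysis.
Set Implicit Arguments.
Unset Strict Implicit.
Unset Printing Implicit Defensive.
Import Order.TTheory GRing.Theory Num.Theory.
Import numFieldNormedType.Exports.
Local Open Scope classical_set_scope.
Local Open Scope ring_scope.

(* A Polish space: a (nonempty) complete metric space which is Hausdorff
   (so the pseudometric is a genuine metric) and separable. *)
Record polish (R : realType) := Polish {
  pcarrier : completePseudoMetricType R ;
  polish_hausdorff : hausdorff_space pcarrier ;
  polish_separable : exists D : set pcarrier, countable D /\ dense D }.

Definition borel (R : realType) (E : polish R) :=
  g_sigma_algebraType (@open (pcarrier E)).

Definition bounded_borel (R : realType) (E : polish R) (f : borel E -> R) :=
  measurable_fun [set: borel E] f /\ exists M : R, forall x, `|f x| <= M.

Definition same_law (R : realType) (E F : polish R)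
  (mu : probability (borel E) R) (f : borel E -> R)
  (nu : probability (borel F) R) (g : borel F -> R) :=
  forall A : set R, measurable A ->
    mu (f @^-1` A) = nu (g @^-1` A).

(* rho_mu(f) = sup_{nu in P(E)} ( \int f dnu - alpha(nu|mu) ).
   alpha E nu mu stands for alpha(nu|mu). *)
Definition rho (R : realType)
  (alpha : forall E : polish R,
     probability (borel E) R -> probability (borel E) R -> \bar R)
  (E : polish R) (mu : probability (borel E) R) (f : borel E -> R) : \bar R :=
  ereal_sup [set ((\int[nu]_x (f x)%:E) - alpha E nu mu)%E
            | nu in [set: probability (borel E) R]].

Definition law_invariant_risk_measure (R : realType) (E : polish R)
  (mu : probability (borel E) R) (r : (borel E -> R) -> \bar R) : Prop :=
      (forall (f : borel E -> R), bounded_borel f -> r f \is a fin_num) /\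
      (forall (f g : borel E -> R) (l : R), bounded_borel f -> bounded_borel g ->
         0 <= l <= 1 ->
         (r (fun x => (l * f x + (1 - l) * g x)%R) <=
          l%:E * r f + (1 - l)%:E * r g)%E) /\
      (* monotone (w.r.t. mu-a.e. order, hence well defined on L^infty) *)
      (forall (f g : borel E -> R), bounded_borel f -> bounded_borel g ->
         {ae mu, forall x, f x <= g x} -> (r f <= r g)%E) /\
      (forall (f : borel E -> R) (c : R), bounded_borel f ->
         r (fun x => (f x + c)%R) = (r f + c%:E)%E) /\
      r (fun=> 0%R) = 0%E /\
      (forall (f g : borel E -> R), bounded_borel f -> bounded_borel g ->
         same_law mu f mu g -> r f = r g).

From HB Require Import structures.
From mathcomp Require Import all_boot all_order all_algebra.
From mathcomp Require Import all_classical all_reals all_analysis.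
From mathcomp Require Import measurable_realfun lra.
Import Order.TTheory GRing.Theory Num.Theory.
Import Num.Def.
Local Open Scope classical_set_scope.
Local Open Scope ring_scope.

(* Each map f |-> \int f dnu - alpha(nu|mu) is affine, monotone and cash
   additive, so their supremum rho_mu is convex, cash additive and normalized
   (alpha >= 0, alpha(mu|mu) = 0); since alpha(nu|mu) = +oo unless nu << mu,
   only such nu matter, which makes rho_mu monotone for the mu-a.e. order.
   For invariance under equality of laws, fix nu' << mu on F and eps > 0, and
   cut the common range of f and g into cells of width eps.  The kernel sending
   x to nu conditioned on {g in the cell of f x} maps mu to nu and maps nu' to a
   measure nu'K giving each g-cell the nu'-mass of the corresponding f-cell.
   Hence \int g d(nu'K) >= \int f dnu' - eps, while the data-processing
   inequality gives alpha(nu'K|nu) <= alpha(nu'|mu). *)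

Section bounded_integral.
Context {d} {T : measurableType d} {R : realType} {P : probability T R}.
Implicit Types (f : T -> R) (M : R).

Lemma integrable_bounded {f M} : measurable_fun setT f ->
  (forall x, `|f x| <= M) -> P.-integrable setT (EFin \o f).
Proof.
move=> mf fM; apply: measurable_bounded_integrable => //.
  by rewrite fin_num_fun_lty.
exists M; split; first by rewrite num_real.
by move=> y My x _; exact: le_trans (fM x) (ltW My).
Qed.

Lemma abse_integral_bounded {f M} : measurable_fun setT f ->
  (forall x, `|f x| <= M) -> (`|\int[P]_x (f x)%:E| <= `|M|%:E)%E.
Proof.
move=> mf fM; apply: le_trans (le_abse_integral _ _ _) _ => //.
  exact/measurable_EFinP.
rewrite -[leRHS]mule1 -(probability_setT P).
apply: integral_le_bound => //; first exact/measurable_EFinP.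
by apply: aeW => x _; rewrite lee_fin (le_trans (fM x)) ?ler_norm.
Qed.

Lemma integral_bounded_fin_num {f M} : measurable_fun setT f ->
  (forall x, `|f x| <= M) -> (\int[P]_x (f x)%:E)%E \is a fin_num.
Proof.
move=> mf fM; rewrite -abse_fin_num ge0_fin_numE //.
by rewrite (le_lt_trans (abse_integral_bounded mf fM)) ?ltry.
Qed.

Lemma integralD_cst {f M} (c : R) : measurable_fun setT f ->
  (forall x, `|f x| <= M) ->
  (\int[P]_x (f x + c)%:E = \int[P]_x (f x)%:E + c%:E)%E.
Proof.
move=> mf fM; under eq_integral do rewrite EFinD.
rewrite integralD //; last exact: finite_measure_integrable_cst.
  by rewrite integral_cst // [X in (_ * X)%E]probability_setT mule1.
exact: integrable_bounded mf fM.
Qed.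

Lemma ae_le_integral_bounded {f g : T -> R} {M N : R} :
  measurable_fun setT f -> (forall x, `|f x| <= M) ->
  measurable_fun setT g -> (forall x, `|g x| <= N) ->
  {ae P, forall x, f x <= g x} ->
  (\int[P]_x (f x)%:E <= \int[P]_x (g x)%:E)%E.
Proof.
move=> mf fM mg gN fg; pose c := `|M| + `|N|.
have shift_ge0 (h : T -> R) K : (forall x, `|h x| <= K) -> `|K| <= c ->
    forall x, [set: T] x -> (0 <= (h x + c)%:E)%E.
  move=> hK Kc x _; rewrite lee_fin -lerBlDl sub0r.
  have := le_trans (hK x) (le_trans (ler_norm K) Kc).
  by rewrite ler_norml => /andP[+ _]; rewrite lerNl.
rewrite -(@leeD2rE _ c%:E) // -(integralD_cst _ mf fM) -(integralD_cst _ mg gN).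
apply: ae_ge0_le_integral => //.
- by apply: shift_ge0 fM _; rewrite lerDl.
- by apply/measurable_EFinP; exact: measurable_funD.
- by apply: shift_ge0 gN _; rewrite lerDr.
- by apply/measurable_EFinP; exact: measurable_funD.
- by apply: filterS fg => x fgx _; rewrite lee_fin lerD2r.
Qed.

End bounded_integral.

Lemma null_dominates_ae {d} {T : measurableType d} {R : realType}
    {mu nu : {measure set T -> \bar R}} {P : T -> Prop} :
  nu `<< mu -> {ae mu, forall x, P x} -> {ae nu, forall x, P x}.
Proof.
move=> /null_content_dominatesP nu_mu [N [mN muN notPN]].
by exists N; split => //; exact: nu_mu.
Qed.

Section finite_partition.
Context {d} {T : measurableType d} {R : realType} {N : nat} {h : T -> 'I_N}.
Hypothesis mh : forall i, measurable (h @^-1` [set i]).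

Lemma measurable_fun_factor {d'} {U : measurableType d'} (phi : 'I_N -> U) :
  measurable_fun setT (phi \o h).
Proof.
move=> _ Y mY; rewrite setTI.
have -> : (phi \o h) @^-1` Y = \bigcup_(i in [set i | Y (phi i)]) h @^-1` [set i].
  by apply/seteqP; split => [x /= Yx|x [i /= Yi hi]]; [exists (h x) | rewrite hi].
by apply: fin_bigcup_measurable => //; exact: finite_finset.
Qed.

Lemma measure_partition (mu : {measure set T -> \bar R}) B : measurable B ->
  (\sum_(i < N) mu (B `&` h @^-1` [set i]))%E = mu B.
Proof.
move=> mB; rewrite -measure_bigsetU_ord //.
- congr (mu _); apply/seteqP; split.
    by elim/big_rec: _ => // i S _ IH y [[By _]|/IH].
  by move=> x Bx; rewrite (bigD1 (h x)) //=; left.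
- by move=> i; exact: measurableI.
- apply/trivIsetP => i j _ _ ij; apply/seteqP; split => // x [[_ /= hi] [_ /= hj]].
  by move: ij; rewrite -hi -hj eqxx.
Qed.

Lemma integral_factor (mu : {finite_measure set T -> \bar R})
    (phi : 'I_N -> \bar R) : (forall i, phi i \is a fin_num) ->
  (\int[mu]_x phi (h x) = \sum_(i < N) phi i * mu (h @^-1` [set i]))%E.
Proof.
move=> phi_fin.
have -> : (fun x => phi (h x)) =
    (fun x => \sum_(i < N) (fine (phi i))%:E * (\1_(h @^-1` [set i]) x)%:E)%E.
  apply/funext => x; rewrite (bigD1 (h x)) //= big1 ?adde0.
    by rewrite indicE mem_set // mule1 fineK.
  by move=> i /negbTE hi; rewrite indicE memNset ?mule0 //= => /esym/eqP; rewrite hi.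
rewrite integral_sum //; last first.
  by move=> i; apply: integrableZl => //; exact: integrable_indic.
apply: eq_bigr => i _.
by rewrite integralZl ?integral_indic ?setIT ?fineK //; exact: integrable_indic.
Qed.

End finite_partition.

Lemma measurable_truncn_eq (R : realType) (k : nat) :
  measurable [set s : R | truncn s = k].
Proof.
case: k => [|k].
  have -> : [set s : R | truncn s = 0%N] = [set` `]-oo, 1%:R[].
    apply/seteqP; split => s /=; rewrite in_itv /= -truncn_le_nat leqn0.
      by move=> ->.
    by move/eqP.
  exact: measurable_itv.
have -> : [set s : R | truncn s = k.+1] = [set` `[k.+1%:R, k.+2%:R[].
  apply/seteqP; split => s /=; rewrite in_itv /= -truncn_le_nat -truncn_gt_nat.
    by move=> ->; rewrite !leqnn.
  by move=> /andP[k1 k2]; apply/eqP; rewrite eqn_leq k2.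
exact: measurable_itv.
Qed.

Section grid.
Context {R : realType} (M eps : R).

Definition grid_size := truncn (2 * M / eps).

(* Points outside [-M, M] land in junk cells: [truncn] is 0 on negative
   numbers and [inord] sends indices out of range to 0. *)
Definition grid_cell (t : R) : 'I_grid_size.+1 := inord (truncn ((t + M) / eps)).

Definition grid_point (i : 'I_grid_size.+1) : R := i%:R * eps - M.

Lemma measurable_grid_cell i : measurable (grid_cell @^-1` [set i]).
Proof.
have -> : grid_cell @^-1` [set i] = (fun t : R => (t + M) / eps) @^-1`
    \bigcup_(k in [set k | inord k = i]) [set s : R | truncn s = k].
  apply/seteqP; split => t /=; first by move=> ti; exists (truncn ((t + M) / eps)).
  by move=> [k /= ki tk]; rewrite /grid_cell tk.
rewrite -[X in measurable X]setTI.
apply: measurable_funM => //; first exact: measurable_funD.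
by apply: bigcup_measurable => k _; exact: measurable_truncn_eq.
Qed.

Lemma measurable_grid_cell_comp {d} {T : measurableType d} {h : T -> R} :
  measurable_fun setT h -> forall i, measurable ((grid_cell \o h) @^-1` [set i]).
Proof.
move=> mh i; rewrite -[X in measurable X]setTI.
exact: mh (measurable_grid_cell i).
Qed.

Lemma grid_point_bounded : exists L, forall i, `|grid_point i| <= L.
Proof.
exists (\sum_i `|grid_point i|) => i.
by rewrite (bigD1 i) //= lerDl sumr_ge0.
Qed.

Lemma grid_point_cell {t} : 0 < eps -> `|t| <= M ->
  grid_point (grid_cell t) <= t < grid_point (grid_cell t) + eps.
Proof.
move=> eps0; rewrite ler_norml => /andP[Mt tM].
have u0 : 0 <= (t + M) / eps by rewrite divr_ge0 ?(ltW eps0) // -lerBlDr sub0r.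
have /andP[k1 k2] := truncn_itv u0.
have k_lt : (truncn ((t + M) / eps) < grid_size.+1)%N.
  rewrite -(ltr_nat R) (le_lt_trans k1) // (le_lt_trans _ (truncnS_gt _)) //.
  by rewrite ler_pM2r ?invr_gt0 //; lra.
rewrite /grid_point /grid_cell inordK //.
move: k1 k2; set k := truncn _ => k1 k2.
rewrite ler_pdivlMr // in k1; rewrite ltr_pdivrMr // in k2.
apply/andP; split; first by rewrite lerBlDr.
rewrite -natr1 mulrDl mul1r in k2; lra.
Qed.

End grid.

Section mbind.
Context {d d'} {X : measurableType d} {Y : measurableType d'} {R : realType}.
Variables (P : probability X R) (k : R.-pker X ~> Y).

Definition mbind (U : set Y) := (\int[P]_x k x U)%E.

Let mbind0 : mbind set0 = 0%E.
Proof.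
by rewrite /mbind (eq_integral (cst 0%E)) ?integral0// => y _; rewrite measure0.
Qed.

Let mbind_ge0 U : (0 <= mbind U)%E. Proof. exact: integral_ge0. Qed.

Let mbind_sigma_additive : semi_sigma_additive mbind.
Proof.
move=> U mU tU mUU; rewrite [X in _ --> X](_ : _ =
  \int[P]_y (\sum_(n <oo) k y (U n)))%E; last first.
  apply: eq_integral => V _.
  by apply/esym/cvg_lim => //; exact/measure_semi_sigma_additive.
apply/cvg_closeP; split.
  by apply: is_cvg_nneseries => n _ _; exact: integral_ge0.
rewrite closeE// integral_nneseries// => n.
exact: measurable_kernel.
Qed.

HB.instance Definition _ := isMeasure.Build _ _ R
  mbind mbind0 mbind_ge0 mbind_sigma_additive.

Let mbind_setT : mbind setT = 1%E.
Proof.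
rewrite /mbind (eq_integral (cst 1%E)); last by move=> x _; exact: prob_kernel.
by rewrite integral_cst // [X in (_ * X)%E]probability_setT mule1.
Qed.

HB.instance Definition _ := Measure_isProbability.Build _ _ R mbind mbind_setT.

End mbind.

Section cell_kernel.
Context {d d'} {X : measurableType d} {Y : measurableType d'} {R : realType}.
Context {N : nat} {hX : X -> 'I_N} {hY : Y -> 'I_N} (nu : probability Y R).
Hypotheses (mhX : forall i, measurable (hX @^-1` [set i]))
  (mhY : forall i, measurable (hY @^-1` [set i])).

(* nu conditioned on the i-th cell; on a nu-null cell [mnormalize] falls back
   to nu itself. *)
Definition cell_cond i := mnormalize (mrestr nu (mhY i)) nu.

Lemma cell_condE i B : nu (hY @^-1` [set i]) != 0%E ->
  cell_cond i B = (nu (B `&` hY @^-1` [set i]) * (fine (nu (hY @^-1` [set i])))^-1%:E)%E.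
Proof.
move=> nu_i; rewrite /cell_cond /mnormalize /= /mrestr /= !setTI.
by rewrite (negbTE nu_i) /= lt_eqF // (le_lt_trans (probability_le1 _ _)) ?ltry.
Qed.

Lemma cell_cond_mul i B : measurable B ->
  (cell_cond i B * nu (hY @^-1` [set i]) = nu (B `&` hY @^-1` [set i]))%E.
Proof.
move=> mB; have [nu_i|nu_i] := eqVneq (nu (hY @^-1` [set i])) 0%E.
  rewrite nu_i mule0; apply/esym/eqP; rewrite -measure_le0 -nu_i.
  by apply: measureIr => //; exact: measurableI.
have nu_i_fin := fin_num_measure nu _ (mhY i).
rewrite cell_condE // -muleA -[X in (_ * (_ * X))%E](fineK nu_i_fin) -EFinM.
by rewrite mulVf ?mule1 // fine_eq0.
Qed.

Lemma cell_cond_cell i j : nu (hY @^-1` [set j]) != 0%E ->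
  cell_cond j (hY @^-1` [set i]) = (i == j)%:R%:E.
Proof.
move=> nu_j; rewrite cell_condE //; have [->|ij] := eqVneq i j.
  have nu_j_fin := fin_num_measure nu _ (mhY j).
  by rewrite setIid -[X in (X * _)%E](fineK nu_j_fin) -EFinM mulfV ?fine_eq0.
suff -> : hY @^-1` [set i] `&` hY @^-1` [set j] = set0 by rewrite measure0 mul0e.
by apply/seteqP; split => // y [/= yi yj]; move: ij; rewrite -yi -yj eqxx.
Qed.

(* [mhX] is made a parameter so that the kernel instances below, which need it,
   are found by inference. *)
#[using="mhX"]
Definition cell_kernel : X -> {measure set Y -> \bar R} :=
  fun x => cell_cond (hX x).

Lemma measurable_cell_kernel U : measurable U ->
  measurable_fun setT (cell_kernel ^~ U).
Proof. by move=> _; exact: (measurable_fun_factor mhX (cell_cond ^~ U)). Qed.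

HB.instance Definition _ :=
  isKernel.Build _ _ _ _ R cell_kernel measurable_cell_kernel.

Lemma cell_kernel_setT x : cell_kernel x setT = 1%E.
Proof. exact: probability_setT. Qed.

HB.instance Definition _ :=
  Kernel_isProbability.Build _ _ _ _ R cell_kernel cell_kernel_setT.

Lemma integral_cell_kernel (mu : probability X R) :
  (forall i, mu (hX @^-1` [set i]) = nu (hY @^-1` [set i])) ->
  forall B, measurable B -> (\int[mu]_x cell_kernel x B)%E = nu B.
Proof.
move=> same_cells B mB.
rewrite (integral_factor mhX mu (cell_cond ^~ B)); last first.
  by move=> i; exact: fin_num_measure.
rewrite -(measure_partition mhY nu _ mB); apply: eq_bigr => i _.
by rewrite (congr1 (fun t => cell_cond i B * t)%E (same_cells i)) cell_cond_mul.
Qed.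

Lemma integral_cell_kernel_cell (mu nu' : probability X R) :
  nu' `<< mu -> (forall i, mu (hX @^-1` [set i]) = nu (hY @^-1` [set i])) ->
  forall i, (\int[nu']_x cell_kernel x (hY @^-1` [set i]))%E = nu' (hX @^-1` [set i]).
Proof.
move=> /null_content_dominatesP nu'_mu same_cells i.
have cellE j : (cell_cond j (hY @^-1` [set i]) * nu' (hX @^-1` [set j]) =
    (i == j)%:R%:E * nu' (hX @^-1` [set j]))%E.
  have [nu_j|nu_j] := eqVneq (nu (hY @^-1` [set j])) 0%E.
    by rewrite nu'_mu ?mule0 //; exact: etrans (same_cells j) nu_j.
  by rewrite cell_cond_cell.
rewrite (integral_factor mhX nu' (cell_cond ^~ _)); last first.
  by move=> j; exact: fin_num_measure.
under eq_bigr do rewrite cellE.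
rewrite (bigD1 i) //= eqxx mul1e big1 ?adde0 // => j /negbTE.
by rewrite eq_sym => ->; rewrite mul0e.
Qed.

End cell_kernel.

Lemma integral_le_same_grid_law d d' (X : measurableType d) (Y : measurableType d')
    (R : realType) (P : probability X R) (Q : probability Y R)
    (f : X -> R) (g : Y -> R) (M eps : R) : 0 < eps ->
  measurable_fun setT f -> (forall x, `|f x| <= M) ->
  measurable_fun setT g -> (forall y, `|g y| <= M) ->
  (forall i, P ((grid_cell M eps \o f) @^-1` [set i]) =
             Q ((grid_cell M eps \o g) @^-1` [set i])) ->
  (\int[P]_x (f x)%:E <= \int[Q]_y (g y)%:E + eps%:E)%E.
Proof.
move=> eps0 mf fM mg gM same_cells.
have mcf := measurable_grid_cell_comp M eps mf.
have mcg := measurable_grid_cell_comp M eps mg.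
have [L pL] := grid_point_bounded M eps.
pose low_f x := grid_point M eps (grid_cell M eps (f x)).
pose low_g y := grid_point M eps (grid_cell M eps (g y)).
have mlf : measurable_fun setT low_f := measurable_fun_factor mcf (grid_point M eps).
have mlg : measurable_fun setT low_g := measurable_fun_factor mcg (grid_point M eps).
have same_low : (\int[P]_x (low_f x)%:E = \int[Q]_y (low_g y)%:E)%E.
  rewrite (integral_factor mcf P (fun i => (grid_point M eps i)%:E)) //.
  rewrite (integral_factor mcg Q (fun i => (grid_point M eps i)%:E)) //.
  by apply: eq_bigr => i _; congr (_ * _)%E; exact: same_cells.
apply: (@le_trans _ _ (\int[P]_x (low_f x + eps)%:E)%E).
  apply: le_integral => //.
  - exact: integrable_bounded mf fM.
  - apply: (integrable_bounded (M := L + eps)); first exact: measurable_funD.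
    by move=> x; rewrite (le_trans (ler_normD _ _)) // (gtr0_norm eps0) lerD2r pL.
  - by move=> x _; rewrite lee_fin; have /andP[_ /ltW] := grid_point_cell M eps eps0 (fM x).
rewrite (integralD_cst _ mlf (fun x => pL _)) same_low leeD2r //.
apply: le_integral => //.
- exact: integrable_bounded mlg (fun y => pL _).
- exact: integrable_bounded mg gM.
- by move=> y _; rewrite lee_fin; have /andP[] := grid_point_cell M eps eps0 (gM y).
Qed.

Section rho_properties.
Context {R : realType} {alpha : forall E : polish R,
  probability (borel E) R -> probability (borel E) R -> \bar R}.
Hypothesis alpha_ge0 : forall (E : polish R) (mu nu : probability (borel E) R),
  (0 <= alpha E nu mu)%E.
Hypothesis alpha_self : forall (E : polish R) (mu : probability (borel E) R),
  alpha E mu mu = 0%E.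
Hypothesis alpha_not_dominated : forall (E : polish R) (mu nu : probability (borel E) R),
  ~ (nu `<< mu) -> alpha E nu mu = +oo%E.
Hypothesis alpha_kernel_le : forall (E F : polish R) (mu nu : probability (borel E) R)
  (K : R.-pker (borel E) ~> (borel F)) (muK nuK : probability (borel F) R),
  (forall B : set (borel F), measurable B -> muK B = (\int[mu]_x K x B)%E) ->
  (forall B : set (borel F), measurable B -> nuK B = (\int[nu]_x K x B)%E) ->
  (alpha F nuK muK <= alpha E nu mu)%E.

Section fixed_reference.
Variables (E : polish R) (mu : probability (borel E) R).

Lemma rho_ge (nu : probability (borel E) R) (f : borel E -> R) :
  (\int[nu]_x (f x)%:E - alpha E nu mu <= rho alpha mu f)%E.
Proof. by apply: ereal_sup_ubound; exists nu. Qed.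

Lemma rho_le (f : borel E -> R) (r : \bar R) :
  (forall nu, alpha E nu mu != +oo%E -> \int[nu]_x (f x)%:E - alpha E nu mu <= r)%E ->
  (rho alpha mu f <= r)%E.
Proof.
move=> le_r; apply: ge_ereal_sup => _ [nu _ <-].
have [->|alpha_fin] := eqVneq (alpha E nu mu) +oo%E; first by rewrite addeNy leNye.
exact: le_r.
Qed.

Lemma dominated_of_alpha_finite (nu : probability (borel E) R) :
  alpha E nu mu != +oo%E -> nu `<< mu.
Proof.
move=> alpha_fin; have [//|not_dom] := pselect (nu `<< mu).
by move: alpha_fin; rewrite alpha_not_dominated // eqxx.
Qed.

Lemma rho_fin_num (f : borel E -> R) : bounded_borel f -> rho alpha mu f \is a fin_num.
Proof.
move=> [mf [M fM]]; rewrite fin_numElt; apply/andP; split.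
  apply: lt_le_trans (rho_ge mu f); rewrite alpha_self sube0.
  by move: (integral_bounded_fin_num (P:=mu) mf fM); rewrite fin_numElt => /andP[].
apply: le_lt_trans (ltry `|M|); apply: rho_le => nu _.
apply: (@le_trans _ _ (\int[nu]_x (f x)%:E - 0)%E); first exact: leeB.
by rewrite sube0 (le_trans (lee_abs _)) // abse_integral_bounded.
Qed.

Lemma rho_convex (f g : borel E -> R) (l : R) :
  bounded_borel f -> bounded_borel g -> 0 <= l <= 1 ->
  (rho alpha mu (fun x => (l * f x + (1 - l) * g x)%R) <=
   l%:E * rho alpha mu f + (1 - l)%:E * rho alpha mu g)%E.
Proof.
move=> bf bg /andP[l0 l1]; have [mf [Mf fM]] := bf; have [mg [Mg gM]] := bg.
apply: rho_le => nu alpha_fin.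
have int_f := integral_bounded_fin_num (P:=nu) mf fM.
have int_g := integral_bounded_fin_num (P:=nu) mg gM.
have -> : (\int[nu]_x (l * f x + (1 - l) * g x)%:E =
    l%:E * \int[nu]_x (f x)%:E + (1 - l)%:E * \int[nu]_x (g x)%:E)%E.
  have int_f' := integrable_bounded (P:=nu) mf fM.
  have int_g' := integrable_bounded (P:=nu) mg gM.
  under eq_integral do rewrite EFinD !EFinM.
  by rewrite integralD ?integralZl //; exact: integrableZl.
have alpha_fin' : alpha E nu mu \is a fin_num by rewrite ge0_fin_numE // ltey.
have := rho_ge nu f; have := rho_ge nu g.
rewrite -(fineK (rho_fin_num _ bf)) -(fineK (rho_fin_num _ bg)) -(fineK alpha_fin').
rewrite -(fineK int_f) -(fineK int_g) -!EFinM -!EFinB -!EFinD !lee_fin => le_g le_f.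
have l1' : 0 <= 1 - l by rewrite subr_ge0.
have := ler_wpM2l l0 le_f; have := ler_wpM2l l1' le_g.
lra.
Qed.

Lemma rho_le_ae (f g : borel E -> R) :
  bounded_borel f -> bounded_borel g -> {ae mu, forall x, f x <= g x} ->
  (rho alpha mu f <= rho alpha mu g)%E.
Proof.
move=> [mf [Mf fM]] [mg [Mg gM]] fg.
apply: rho_le => nu /dominated_of_alpha_finite nu_mu.
apply: le_trans (rho_ge nu g); apply: leeB => //.
exact: ae_le_integral_bounded mf fM mg gM (null_dominates_ae nu_mu fg).
Qed.

Lemma rhoD_cst (f : borel E -> R) (c : R) : bounded_borel f ->
  rho alpha mu (fun x => (f x + c)%R) = (rho alpha mu f + c%:E)%E.
Proof.
move=> [mf [M fM]]; apply/le_anti/andP; split.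
  apply: rho_le => nu _; rewrite (integralD_cst c mf fM) addeAC leeD2r //.
  exact: rho_ge.
rewrite -leeBrDr //; apply: rho_le => nu _.
rewrite leeBrDr // addeAC -(integralD_cst c mf fM).
exact: (rho_ge nu (fun x => f x + c)).
Qed.

Lemma rho_cst0 : rho alpha mu (fun=> 0%R) = 0%E.
Proof.
apply/le_anti/andP; split.
  by apply: rho_le => nu _; rewrite integral_cst // mul0e sub0e oppe_le0.
by apply: le_trans (rho_ge mu _); rewrite alpha_self integral_cst // mul0e sube0.
Qed.

End fixed_reference.

Lemma rho_le_same_law (F G : polish R) (mu : probability (borel F) R)
    (nu : probability (borel G) R) (f : borel F -> R) (g : borel G -> R) :
  bounded_borel f -> bounded_borel g -> same_law mu f nu g ->
  (rho alpha mu f <= rho alpha nu g)%E.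
Proof.
move=> [mf [Mf fMf]] [mg [Mg gMg]] fg_law; pose M := Num.max Mf Mg.
have fM x : `|f x| <= M by rewrite le_max fMf.
have gM y : `|g y| <= M by rewrite le_max gMg orbT.
apply/lee_addgt0Pr => eps eps0.
apply: rho_le => nu' /dominated_of_alpha_finite nu'_mu.
have mcf := measurable_grid_cell_comp M eps mf.
have mcg := measurable_grid_cell_comp M eps mg.
have same_cells i : mu ((grid_cell M eps \o f) @^-1` [set i]) =
    nu ((grid_cell M eps \o g) @^-1` [set i]).
  exact: fg_law (measurable_grid_cell M eps i).
pose K := cell_kernel nu mcf mcg.
pose nuK := mbind nu' K.
have alpha_le : (alpha G nuK nu <= alpha F nu' mu)%E.
  apply: (alpha_kernel_le _ _ _ _ K) => // B mB.
  by rewrite (integral_cell_kernel _ _ _ _ same_cells).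
have int_le : (\int[nu']_x (f x)%:E <= \int[nuK]_y (g y)%:E + eps%:E)%E.
  apply: integral_le_same_grid_law eps0 mf fM mg gM _ => i.
  exact/esym/(integral_cell_kernel_cell _ _ _ _ _ nu'_mu same_cells).
apply: le_trans (leeD2r _ (rho_ge _ _ nuK g)).
by rewrite [leRHS]addeAC; exact: leeB.
Qed.

Lemma rho_same_law (F G : polish R) (mu : probability (borel F) R)
    (nu : probability (borel G) R) (f : borel F -> R) (g : borel G -> R) :
  bounded_borel f -> bounded_borel g -> same_law mu f nu g ->
  rho alpha mu f = rho alpha nu g.
Proof.
move=> bf bg fg_law; apply/le_anti/andP; split; first exact: rho_le_same_law.
by apply: rho_le_same_law => // A mA; rewrite fg_law.
Qed.

End rho_properties.

Theorem theorem2p7 (R : realType)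
  (alpha : forall E : polish R,
     probability (borel E) R -> probability (borel E) R -> \bar R)
  (alpha_ge0 : forall (E : polish R) (mu nu : probability (borel E) R),
     (0 <= alpha E nu mu)%E)
  (H1 : forall (E : polish R) (mu : probability (borel E) R),
     alpha E mu mu = 0%E)
  (H2 : forall (E : polish R) (mu nu : probability (borel E) R),
     ~ (nu `<< mu) -> alpha E nu mu = +oo%E)
  (H3 : forall (E F : polish R) (mu nu : probability (borel E) R)
     (K : R.-pker (borel E) ~> (borel F))
     (muK nuK : probability (borel F) R),
     (forall B : set (borel F), measurable B ->
        muK B = (\int[mu]_x K x B)%E) ->
     (forall B : set (borel F), measurable B ->
        nuK B = (\int[nu]_x K x B)%E) ->
     (alpha F nuK muK <= alpha E nu mu)%E) :
  (forall (E : polish R) (mu : probability (borel E) R),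
     law_invariant_risk_measure mu (rho alpha mu)) /\
  (forall (F G : polish R) (mu : probability (borel F) R)
     (nu : probability (borel G) R) (f : borel F -> R) (g : borel G -> R),
     bounded_borel f -> bounded_borel g ->
     same_law mu f nu g -> rho alpha mu f = rho alpha nu g).
Proof.
split; last exact: rho_same_law H2 H3.
move=> E mu; split; first exact: rho_fin_num alpha_ge0 H1 E mu.
split; first exact: rho_convex alpha_ge0 H1 E mu.
split; first exact: rho_le_ae H2 E mu.
split; first exact: rhoD_cst E mu.
split; first exact: rho_cst0 alpha_ge0 H1 E mu.
move=> f g bf bg; exact: (rho_same_law H2 H3 E E mu mu f g bf bg).
Qed.
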